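(* Let $M$ be a metric space with metric $d$, let $s\in M$ and let $r>1$. For $n\in\mathbb{Z}$ let $M_n=\{s\}\cup\{p\in M : d(s,p)\in[r^n,r^{n+1})\}$ (with the restricted metric). If for each $n\in\mathbb{Z}$ the infinite server problem on $(M_n,s)$ admits a strictly $\rho$-competitive online algorithm, then the infinite server problem on $(M,s)$ admits a strictly $\frac{4r-1}{r-1}\rho$-competitive online algorithm.
   Context: Infinite server problem on $(M,s)$: $M$ is a metric space and $s\in M$ the source; an unbounded number of servers initially reside at $s$. A finite sequence of requests (points of $M$) is revealed one by one; each must be served immediately, without knowledge of future requests, by moving some server to it; the cost is the total distance traveled. An online algorithm $ALG$ is strictly $\rho$-competitive if $ALG(\sigma)\le\rho\,OPT(\sigma)$ for every request sequence $\sigma$, where $OPT(\sigma)$ is the optimal offline cost. *)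

From mathcomp Require Import all_boot all_order all_algebra.
From mathcomp Require Import boolp classical_sets reals.
Set Implicit Arguments. Unset Strict Implicit. Unset Printing Implicit Defensive.
Import Order.TTheory GRing.Theory Num.Theory.
Local Open Scope ring_scope.
Local Open Scope classical_set_scope.

Section InfServer.
Variables (R : realType) (T : Type).

Definition is_metric (d : T -> T -> R) : Prop :=
  (forall x y, 0 <= d x y) /\ (forall x y, d x y = 0 <-> x = y) /\
  (forall x y, d x y = d y x) /\ (forall x y z, d x z <= d x y + d y z).

Definition config := nat -> T.

Definition init_config (s : T) : config := fun _ => s.

Definition move (c : config) (i : nat) (p : T) : config :=
  fun j => if j == i then p else c j.

Fixpoint serve (d : T -> T -> R) (choice : nat -> nat) (c : config) (sigma : seq T)
  : R :=
  match sigma with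
  | [::] => 0
  | p :: rest =>
      d (c (choice 0%N)) p + serve d (fun k => choice k.+1) (move c (choice 0%N) p) rest
  end.

(* A deterministic online algorithm: given the requests revealed so far
   (the last one being the current request), it chooses which server to move. *)
Definition online_alg := seq T -> nat.

Definition ALG_cost (d : T -> T -> R) (s : T) (alg : online_alg) (sigma : seq T) : R :=
  serve d (fun k => alg (take k.+1 sigma)) (init_config s) sigma.

Definition OPT_cost (d : T -> T -> R) (s : T) (sigma : seq T) : R :=
  inf (range (fun f : nat -> nat => serve d f (init_config s) sigma)).

Definition strictly_competitive (d : T -> T -> R) (s : T) (alg : online_alg) (rho : R)
  : Prop :=
  forall sigma : seq T, ALG_cost d s alg sigma <= rho * OPT_cost d s sigma.

Definition admits_strictly_competitive (d : T -> T -> R) (s : T) (rho : R) : Prop :=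
  exists alg : online_alg, strictly_competitive d s alg rho.

End InfServer.

Definition ring_pt {R : realType} {T : Type} (d : T -> T -> R) (s : T) (r : R) (n : int)
  (p : T) : Prop :=
  p = s \/ (r ^ n <= d s p /\ d s p < r ^ (n + 1)).

Definition Msub {R : realType} {T : Type} (d : T -> T -> R) (s : T) (r : R) (n : int) :=
  {p : T | ring_pt d s r n p}.

Definition Msub_dist {R : realType} {T : Type} (d : T -> T -> R) (s : T) (r : R) (n : int)
  : Msub d s r n -> Msub d s r n -> R :=
  fun x y => d (proj1_sig x) (proj1_sig y).

Definition Msub_src {R : realType} {T : Type} (d : T -> T -> R) (s : T) (r : R) (n : int)
  : Msub d s r n := exist _ s (or_introl erefl).

Arguments Msub_dist {R T} d s r n.
Arguments Msub_src {R T} d s r n.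
Arguments Msub {R T} d s r n.
Arguments ring_pt {R T} d s r n p.

(* Requests in ring [n] are handed to the rho-competitive algorithm of [M_n], and
   requests at [s] to servers that never moved, so
   ALG(sigma) = sum_n ALG_n(sigma_n) <= rho * sum_n OPT_n(sigma_n).
   Conversely, an offline schedule for sigma induces schedules for the sigma_n:
   each offline server has a shadow server in every ring, and when it serves a
   request in ring [m] its shadow there follows it, or is replaced by a fresh server
   from [s] when that is cheaper.  A potential charging each offline server for its
   shadows in the rings adjacent to its own shows that a move of length delta costs
   the shadows at most (4 + 3/(r-1)) delta = (4r-1)/(r-1) delta in amortized terms,
   whence sum_n OPT_n(sigma_n) <= (4r-1)/(r-1) OPT(sigma). *)

From mathcomp Require Import all_boot all_order all_algebra.
From mathcomp Require Import zify.
From mathcomp Require Import boolp classical_sets reals.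
From mathcomp Require Import ring lra.
Import Order.TTheory GRing.Theory Num.Theory.
Local Open Scope ring_scope.
Set Implicit Arguments. Unset Strict Implicit. Unset Printing Implicit Defensive.

Section Schedules.
Variables (R : realType) (T : Type) (d : T -> T -> R).

Fixpoint served_config (f : nat -> nat) (c : config T) (t : seq T) : config T :=
  match t with
  | [::] => c
  | p :: t' => served_config (fun k => f k.+1) (move c (f 0%N) p) t'
  end.

Lemma serve_rcons f c t x :
  serve d f c (rcons t x) = serve d f c t + d (served_config f c t (f (size t))) x.
Proof.
elim: t f c => [|p t IH] f c /=; first by rewrite !add0r addr0.
by rewrite IH addrA.
Qed.

Lemma served_config_rcons f c t x :
  served_config f c (rcons t x) = move (served_config f c t) (f (size t)) x.
Proof. by elim: t f c => [|p t IH] f c //=. Qed.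

Lemma eq_serve f g c t : {in gtn (size t), f =1 g} -> serve d f c t = serve d g c t.
Proof.
elim: t f g c => [|p t IH] f g c //= fg.
by rewrite fg //; congr (_ + _); apply: IH => k k_lt; apply: fg.
Qed.

Lemma eq_served_config f g c t :
  {in gtn (size t), f =1 g} -> served_config f c t = served_config g c t.
Proof.
elim: t f g c => [|p t IH] f g c //= fg.
by rewrite fg //; apply: IH => k k_lt; apply: fg.
Qed.

Definition reachable (s : T) (t : seq T) (c : config T) (C : R) :=
  exists f, serve d f (init_config s) t = C /\ served_config f (init_config s) t = c.

Lemma reachable_nil s : reachable s [::] (init_config s) 0.
Proof. by exists (fun=> 0%N). Qed.

Lemma reachable_rcons s t c C i x : reachable s t c C ->
  reachable s (rcons t x) (move c i x) (C + d (c i) x).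
Proof.
move=> [f [<- <-]]; exists (fun k => if k == size t then i else f k).
have ft : {in gtn (size t), (fun k => if k == size t then i else f k) =1 f}.
  by move=> k /ltn_eqF ->.
by rewrite serve_rcons served_config_rcons eqxx (eq_serve _ ft) (eq_served_config _ ft).
Qed.

Definition alg_config (s : T) (alg : online_alg T) (t : seq T) :=
  served_config (fun k => alg (take k.+1 t)) (init_config s) t.

Let alg_rcons_prefix (alg : online_alg T) t x :
  {in gtn (size t), (fun k => alg (take k.+1 (rcons t x))) =1 (fun k => alg (take k.+1 t))}.
Proof. by move=> k k_lt; rewrite -cats1 takel_cat. Qed.

Lemma ALG_cost_rcons s alg t x :
  ALG_cost d s alg (rcons t x) =
  ALG_cost d s alg t + d (alg_config s alg t (alg (rcons t x))) x.
Proof.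
rewrite /ALG_cost serve_rcons (eq_serve _ (@alg_rcons_prefix alg t x)).
by rewrite /alg_config (eq_served_config _ (@alg_rcons_prefix alg t x)) take_oversize ?size_rcons.
Qed.

Lemma alg_config_rcons s alg t x :
  alg_config s alg (rcons t x) = move (alg_config s alg t) (alg (rcons t x)) x.
Proof.
rewrite /alg_config served_config_rcons (eq_served_config _ (@alg_rcons_prefix alg t x)).
by rewrite take_oversize ?size_rcons.
Qed.

Hypothesis d_ge0 : forall x y, 0 <= d x y.

Lemma serve_ge0 f c t : 0 <= serve d f c t.
Proof. by elim: t f c => [|p t IH] f c //=; rewrite addr_ge0. Qed.

Let has_lbound_serve s t :
  has_lbound (range (fun f : nat -> nat => serve d f (init_config s) t)).
Proof. by exists 0 => _ [f _ <-]; apply: serve_ge0. Qed.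

Lemma OPT_cost_le s t c C : reachable s t c C -> OPT_cost d s t <= C.
Proof. by move=> [f [<- _]]; apply: ge_inf; [exact: has_lbound_serve | exists f]. Qed.

Lemma OPT_cost_le_ALG_cost s alg t : OPT_cost d s t <= ALG_cost d s alg t.
Proof. by apply: (@OPT_cost_le s t (alg_config s alg t)); exists (fun k => alg (take k.+1 t)). Qed.

Lemma le_OPT_cost m s t : (forall f, m <= serve d f (init_config s) t) ->
  m <= OPT_cost d s t.
Proof.
move=> lb; apply: lb_le_inf => [|_ [f _ <-] //].
by exists (serve d (fun=> 0%N) (init_config s) t), (fun=> 0%N).
Qed.

Lemma OPT_cost_ge0 s t : 0 <= OPT_cost d s t.
Proof. by apply: le_OPT_cost => f; apply: serve_ge0. Qed.

(* For [rho < 0] the hypotheses force [ALG_cost d s alg t = OPT_cost d s t = 0]. *)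
Lemma ALG_cost_le_scale s alg t (rho C X : R) : 0 <= C -> 0 <= X ->
  ALG_cost d s alg t <= rho * X -> X <= C * OPT_cost d s t ->
  ALG_cost d s alg t <= C * rho * OPT_cost d s t.
Proof.
move=> C_ge0 X_ge0 ALG_le X_le; have [rho_ge0 | rho_lt0] := leP 0 rho.
  by rewrite mulrAC; apply: le_trans ALG_le _; rewrite mulrC ler_wpM2r.
have ALG_le0 := le_trans ALG_le (mulr_le0_ge0 (ltW rho_lt0) X_ge0).
suff -> : OPT_cost d s t = 0 by rewrite mulr0.
by apply: le_anti; rewrite OPT_cost_ge0 // andbT (le_trans (OPT_cost_le_ALG_cost s alg t)).
Qed.

End Schedules.

Section Metric.
Variables (R : realType) (T : Type) (d : T -> T -> R).
Hypothesis d_metric : is_metric d.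

Lemma metric_ge0 x y : 0 <= d x y. Proof. by case: d_metric. Qed.

Lemma metric_eq0 x y : d x y = 0 <-> x = y. Proof. by case: d_metric => _ []. Qed.

Lemma metric_xx x : d x x = 0. Proof. exact/metric_eq0. Qed.

Lemma metricC x y : d x y = d y x. Proof. by case: d_metric => _ [_ []]. Qed.

Lemma metric_triangle x y z : d x z <= d x y + d y z.
Proof. by case: d_metric => _ [_ []]. Qed.

Lemma metric_gt0 x y : x <> y -> 0 < d x y.
Proof. by move=> xy; rewrite lt_def metric_ge0 andbT; apply/eqP => /metric_eq0. Qed.

End Metric.

Section Powers.
Variables (R : realType) (r : R).
Hypothesis r_gt1 : 1 < r.

Lemma exprn_ge_bernoulli (n : nat) : 1 + n%:R * (r - 1) <= r ^+ n.
Proof.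
elim: n => [|n IH]; first by rewrite mul0r addr0 expr0.
have r_ge1 : 1 <= r by apply: ltW.
have := ler_wpM2l (le_trans ler01 r_ge1) IH.
rewrite exprS -natr1; have : 0 <= n%:R * (r - 1) * (r - 1) by rewrite !mulr_ge0 ?subr_ge0.
nra.
Qed.

Lemma exists_exprn_gt (v : R) : exists n : nat, v < r ^+ n.
Proof.
have r1_gt0 : 0 < r - 1 by rewrite subr_gt0.
have := archi_boundP (divr_ge0 (normr_ge0 v) (ltW r1_gt0)).
set n := Num.Def.archi_bound _; rewrite ltr_pdivrMr // => vn.
by exists n; have := exprn_ge_bernoulli n; have := ler_norm v; lra.
Qed.

Lemma exists_expz_bracket (v : R) : 0 < v -> exists n : int, r ^ n <= v < r ^ (n + 1).
Proof.
move=> v_gt0; have [N vN] := exists_exprn_gt v; have [M vM] := exists_exprn_gt v^-1.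
have rM_lt : r ^ (- M%:Z) < v.
  rewrite -invr_expz -[v]invrK ltf_pV2 ?posrE ?invr_gt0 ?exprz_gt0 //.
  exact: lt_trans r_gt1.
have bracket_below (k : nat) : v < r ^ (k%:Z - M%:Z) ->
    exists n : int, r ^ n <= v < r ^ (n + 1).
  elim: k => [|k IH] v_lt; first by move: v_lt; rewrite sub0r; lra.
  have [le_v|] := leP (r ^ (k%:Z - M%:Z)) v; last exact: IH.
  exists (k%:Z - M%:Z); rewrite le_v /=.
  by have -> : k%:Z - M%:Z + 1 = k.+1%:Z - M%:Z by lia.
by apply: (bracket_below (N + M)%N); have -> : (N + M)%N%:Z - M%:Z = N%:Z by lia.
Qed.

End Powers.

Section Potential.
Variables (R : realType) (T : Type) (d : T -> T -> R) (s : T) (r : R).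
Hypotheses (d_metric : is_metric d) (r_gt1 : 1 < r).

Definition ring_index (x : T) : int :=
  match pselect (exists n : int, r ^ n <= d s x < r ^ (n + 1)) with
  | left ex => projT1 (cid ex)
  | right _ => 0
  end.

Lemma ring_index_bounds x : x <> s -> r ^ ring_index x <= d s x < r ^ (ring_index x + 1).
Proof.
move=> xs; rewrite /ring_index; case: pselect => [ex|[]]; first by case: (cid ex).
by apply: exists_expz_bracket => //; apply: metric_gt0 => // sx; apply: xs.
Qed.

Lemma ring_index_eq x n : x <> s -> r ^ n <= d s x < r ^ (n + 1) -> ring_index x = n.
Proof.
move=> xs /andP[lo hi]; have /andP[xlo xhi] := ring_index_bounds xs.
have : n < ring_index x + 1 by rewrite -(ltr_eXz2l r_gt1); apply: le_lt_trans xhi.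
have : ring_index x < n + 1 by rewrite -(ltr_eXz2l r_gt1); apply: le_lt_trans hi.
lia.
Qed.

Let ge0 := metric_ge0 d_metric.
Let triangle := metric_triangle d_metric.

Let dist_src_lipschitz x p : d s p <= d s x + d x p /\ d s x <= d s p + d x p.
Proof. by split; rewrite // (metricC d_metric x p). Qed.

Let expz_lt m n : m < n -> r ^ m < r ^ n. Proof. by rewrite ltr_eXz2l. Qed.

Let a := (r - 1)^-1.

Let a_gt0 : 0 < a. Proof. by rewrite invr_gt0 subr_gt0. Qed.

Let a_expzS n : a * r ^ (n + 1) = (1 + a) * r ^ n.
Proof.
have r_neq0 : r != 0 by rewrite gt_eqF // (lt_trans ltr01).
have r1_neq0 : r - 1 != 0 by rewrite subr_eq0 gt_eqF.
by rewrite expfzDr // expr1z /a; field.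
Qed.

(* Weighted distance from [d s x] to the interval [[r ^ n, r ^ (n + 1))]; the slopes
   [a] and [1 + a] are balanced so that, for [x] in ring [m], the shadow potentials
   of rings [m - 1] and [m + 1] add up to at most [d s x]. *)
Definition ring_penalty (n : int) (x : T) : R :=
  a * Num.max 0 (r ^ n - d s x) + (1 + a) * Num.max 0 (d s x - r ^ (n + 1)).

(* A shadow at [y] in ring [n] can catch up with [x] at cost [min (d y x) (d s x)],
   using a fresh server from [s] if needed. *)
Definition shadow_pot (n : int) (x y : T) : R :=
  Num.max 0 (Num.min (d y x) (d s x) - ring_penalty n x).

(* Shadows two or more rings away from that of [x] would carry no potential. *)
Definition pot (x : T) (Y : int -> T) : R :=
  let m := ring_index x in
  shadow_pot (m - 1) x (Y (m - 1)) + shadow_pot m x (Y m) + shadow_pot (m + 1) x (Y (m + 1)).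

Lemma ring_penalty_ge0 n x : 0 <= ring_penalty n x.
Proof.
have a_ge0 := ltW a_gt0.
rewrite /ring_penalty; apply: addr_ge0; apply: mulr_ge0; rewrite ?le_max ?lexx //.
exact: addr_ge0.
Qed.

Section AtPoint.
Variable x : T.
Hypothesis xs : x <> s.
Let m := ring_index x.

Let m_bounds : r ^ m <= d s x < r ^ (m + 1). Proof. exact: ring_index_bounds. Qed.

Lemma ring_penalty_index : ring_penalty m x = 0.
Proof.
have /andP[lo hi] := m_bounds.
have hi2 : r ^ (m + 1) < r ^ (m + 1 + 1) by apply: expz_lt; lia.
by rewrite /ring_penalty !max_l ?mulr0 ?addr0 //; lra.
Qed.

Lemma ring_penalty_succ : ring_penalty (m + 1) x = a * (r ^ (m + 1) - d s x).
Proof.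
have /andP[lo hi] := m_bounds.
have hi2 : r ^ (m + 1) < r ^ (m + 1 + 1) by apply: expz_lt; lia.
by rewrite /ring_penalty (@max_l _ _ 0 (d s x - _)) ?max_r ?mulr0 ?addr0 //; lra.
Qed.

Lemma ring_penalty_pred : ring_penalty (m - 1) x = (1 + a) * (d s x - r ^ m).
Proof.
have /andP[lo hi] := m_bounds.
have lo2 : r ^ (m - 1) < r ^ m by apply: expz_lt; lia.
by rewrite /ring_penalty subrK (@max_l _ _ 0 (_ - d s x)) ?max_r ?mulr0 ?add0r //; lra.
Qed.

End AtPoint.

Lemma shadow_pot_ge0 n x y : 0 <= shadow_pot n x y.
Proof. by rewrite le_max lexx. Qed.

Lemma shadow_pot_ge n x y :
  Num.min (d y x) (d s x) - ring_penalty n x <= shadow_pot n x y.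
Proof. by rewrite le_max lexx orbT. Qed.

Lemma shadow_pot_le n x y B : 0 <= B ->
  Num.min (d y x) (d s x) - ring_penalty n x <= B -> shadow_pot n x y <= B.
Proof. by move=> B_ge0 le_B; rewrite ge_max B_ge0 le_B. Qed.

Lemma shadow_pot_le_src n x y B : 0 <= B -> d s x - ring_penalty n x <= B ->
  shadow_pot n x y <= B.
Proof.
move=> B_ge0 le_B; apply: shadow_pot_le => //; apply: le_trans le_B.
by rewrite lerD2r ge_min lexx orbT.
Qed.

Lemma shadow_pot_xx n x : shadow_pot n x x = 0.
Proof.
apply/eqP; rewrite eq_le shadow_pot_ge0 andbT shadow_pot_le //.
by rewrite metric_xx // subr_le0 ge_min ring_penalty_ge0.
Qed.

Lemma shadow_pot_src n y : shadow_pot n s y = 0.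
Proof.
apply/eqP; rewrite eq_le shadow_pot_ge0 andbT shadow_pot_le_src //.
by rewrite metric_xx // sub0r oppr_le0 ring_penalty_ge0.
Qed.

Lemma shadow_pot_pred_le x y : x <> s ->
  shadow_pot (ring_index x - 1) x y <= a * (r ^ (ring_index x + 1) - d s x).
Proof.
move=> xs; have /andP[lo hi] := ring_index_bounds xs.
have ar := a_expzS (ring_index x); have a_ge0 := ltW a_gt0.
by apply: shadow_pot_le_src; rewrite ?ring_penalty_pred //; nra.
Qed.

Lemma shadow_pot_succ_le x y : x <> s ->
  shadow_pot (ring_index x + 1) x y <= (1 + a) * (d s x - r ^ ring_index x).
Proof.
move=> xs; have /andP[lo hi] := ring_index_bounds xs.
have ar := a_expzS (ring_index x); have a_ge0 := ltW a_gt0.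
by apply: shadow_pot_le_src; rewrite ?ring_penalty_succ //; nra.
Qed.

Lemma min_dist_lipschitz x p y :
  Num.min (d y p) (d s p) <= Num.min (d y x) (d s x) + d x p.
Proof.
have [sp _] := dist_src_lipschitz x p; have yp := triangle y x p.
by rewrite -lerBlDr le_min !lerBlDr !ge_min yp sp orbT.
Qed.

Lemma shadow_pot_lipschitz n x p y B : 0 <= B ->
  d x p + (ring_penalty n x - ring_penalty n p) <= B ->
  shadow_pot n p y <= shadow_pot n x y + B.
Proof.
move=> B_ge0 le_B; apply: shadow_pot_le; first by rewrite addr_ge0 ?shadow_pot_ge0.
have := min_dist_lipschitz x p y; have := shadow_pot_ge n x y; lra.
Qed.

Lemma pot_ge0 x Y : 0 <= pot x Y.
Proof. by rewrite !addr_ge0 ?shadow_pot_ge0. Qed.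

Lemma pot_src Y : pot s Y = 0.
Proof. by rewrite /pot !shadow_pot_src !addr0. Qed.

Lemma pot_request_le p y1 y2 y3 (m := ring_index p) : p <> s ->
  Num.min (d y1 p) (d s p) + shadow_pot (m - 1) p y2 + shadow_pot (m + 1) p y3 <= 2 * d s p.
Proof.
move=> ps; have := shadow_pot_pred_le y2 ps; have := shadow_pot_succ_le y3 ps.
have := a_expzS m; have : Num.min (d y1 p) (d s p) <= d s p by rewrite ge_min lexx orbT.
lra.
Qed.

Lemma min_dist_le_shadow_pot n x p y :
  Num.min (d y p) (d s p) <= shadow_pot n x y + ring_penalty n x + d x p.
Proof. have := min_dist_lipschitz x p y; have := shadow_pot_ge n x y; lra. Qed.

Lemma shadow_pot_index_lipschitz x p y (n := ring_index x) : x <> s ->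
  shadow_pot n p y <= shadow_pot n x y + d x p.
Proof.
move=> xs; apply: shadow_pot_lipschitz => //.
by rewrite ring_penalty_index // sub0r lerBlDr lerDl ring_penalty_ge0.
Qed.

Lemma dist_src_le_far x p : x <> s -> p <> s ->
  ring_index x + 2 <= ring_index p \/ ring_index p + 2 <= ring_index x ->
  d s p <= (1 + a) * d x p.
Proof.
move=> xs ps far; have [sp sx] := dist_src_lipschitz x p.
have /andP[xlo xhi] := ring_index_bounds xs; have /andP[plo phi] := ring_index_bounds ps.
move: far xlo xhi plo phi; set n := ring_index x; set m := ring_index p => far xlo xhi plo phi.
have a_ge0 := ltW a_gt0; have del_ge0 := ge0 x p.
case: far => far.
- have q_le : r ^ (n + 1) <= r ^ (m - 1) by rewrite ler_eXz2l //; lia.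
  have ar := a_expzS (m - 1); rewrite subrK in ar.
  have : 0 <= (1 + a) * (d x p - (d s p - r ^ (m - 1))) by apply: mulr_ge0; lra.
  have : 0 <= a * (d s p - r ^ m) by apply: mulr_ge0; lra.
  lra.
- have q_le : r ^ (m + 1 + 1) <= r ^ n by rewrite ler_eXz2l //; lia.
  have ar := a_expzS (m + 1).
  have : 0 <= a * (d x p - (r ^ (m + 1 + 1) - d s p)) by apply: mulr_ge0; lra.
  have : 0 <= (1 + a) * (r ^ (m + 1) - d s p) by apply: mulr_ge0; lra.
  have : 0 <= d x p + a * d x p by apply: addr_ge0 => //; apply: mulr_ge0.
  lra.
Qed.

Lemma pot_step_same x p Y m : x <> s -> p <> s -> ring_index x = m -> ring_index p = m ->
  Num.min (d (Y m) p) (d s p) + shadow_pot (m - 1) p (Y (m - 1))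
    + shadow_pot (m + 1) p (Y (m + 1))
  <= pot x Y + (4 + 2 * a) * d x p.
Proof.
move=> xs ps xm pm; have [sp sx] := dist_src_lipschitz x p.
have a_ge0 := ltW a_gt0; have del_ge0 := ge0 x p.
have pay := min_dist_le_shadow_pot (ring_index x) x p (Y m).
rewrite ring_penalty_index // xm in pay.
have succ : shadow_pot (m + 1) p (Y (m + 1))
    <= shadow_pot (m + 1) x (Y (m + 1)) + (1 + a) * d x p.
  apply: shadow_pot_lipschitz; first by rewrite mulr_ge0 ?addr_ge0.
  have := ring_penalty_succ xs; have := ring_penalty_succ ps; rewrite xm pm => -> ->.
  have : a * (d s p - d s x) <= a * d x p by apply: ler_wpM2l => //; lra.
  lra.
have pred : shadow_pot (m - 1) p (Y (m - 1))
    <= shadow_pot (m - 1) x (Y (m - 1)) + (2 + a) * d x p.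
  apply: shadow_pot_lipschitz; first by rewrite mulr_ge0 ?addr_ge0.
  have := ring_penalty_pred xs; have := ring_penalty_pred ps; rewrite xm pm => -> ->.
  have : (1 + a) * (d s x - d s p) <= (1 + a) * d x p by apply: ler_wpM2l; lra.
  lra.
by move: pay succ pred; rewrite /pot xm; lra.
Qed.

Lemma pot_step_succ x p Y m : x <> s -> p <> s -> ring_index x = m - 1 ->
  ring_index p = m ->
  Num.min (d (Y m) p) (d s p) + shadow_pot (m - 1) p (Y (m - 1))
    + shadow_pot (m + 1) p (Y (m + 1))
  <= pot x Y + (3 + 2 * a) * d x p.
Proof.
move=> xs ps xm pm; have [sp sx] := dist_src_lipschitz x p.
have /andP[_ xhi] := ring_index_bounds xs; have /andP[plo _] := ring_index_bounds ps.
rewrite xm subrK pm in xhi plo.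
have a_ge0 := ltW a_gt0; have del_ge0 := ge0 x p.
have pay := min_dist_le_shadow_pot m x p (Y m).
have := ring_penalty_succ xs; rewrite xm subrK => pen_x; rewrite pen_x in pay.
have : a * (r ^ m - d s x) <= a * d x p by apply: ler_wpM2l => //; lra.
have := shadow_pot_index_lipschitz p (Y (m - 1)) xs; rewrite xm.
have := shadow_pot_succ_le (Y (m + 1)) ps; rewrite pm.
have : (1 + a) * (d s p - r ^ m) <= (1 + a) * d x p by apply: ler_wpM2l; lra.
have := shadow_pot_ge0 (m - 1 - 1) x (Y (m - 1 - 1)).
by rewrite /pot xm subrK; lra.
Qed.

Lemma pot_step_pred x p Y m : x <> s -> p <> s -> ring_index x = m + 1 ->
  ring_index p = m ->
  Num.min (d (Y m) p) (d s p) + shadow_pot (m - 1) p (Y (m - 1))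
    + shadow_pot (m + 1) p (Y (m + 1))
  <= pot x Y + (3 + 2 * a) * d x p.
Proof.
move=> xs ps xm pm; have [sp sx] := dist_src_lipschitz x p.
have /andP[xlo _] := ring_index_bounds xs; have /andP[_ phi] := ring_index_bounds ps.
rewrite xm in xlo; rewrite pm in phi.
have a_ge0 := ltW a_gt0; have del_ge0 := ge0 x p.
have pay := min_dist_le_shadow_pot m x p (Y m).
have := ring_penalty_pred xs; rewrite xm addrK => pen_x; rewrite pen_x in pay.
have : (1 + a) * (d s x - r ^ (m + 1)) <= (1 + a) * d x p by apply: ler_wpM2l; lra.
have := shadow_pot_index_lipschitz p (Y (m + 1)) xs; rewrite xm.
have := shadow_pot_pred_le (Y (m - 1)) ps; rewrite pm.
have : a * (r ^ (m + 1) - d s p) <= a * d x p by apply: ler_wpM2l => //; lra.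
have := shadow_pot_ge0 (m + 1 + 1) x (Y (m + 1 + 1)).
by rewrite /pot xm addrK; lra.
Qed.

Lemma pot_step x p Y (m := ring_index p) : p <> s ->
  Num.min (d (Y m) p) (d s p) + pot p (fun n => if n == m then p else Y n)
  <= pot x Y + (4 * r - 1) / (r - 1) * d x p.
Proof.
move=> ps.
have -> : (4 * r - 1) / (r - 1) = 4 + 3 * a.
  by rewrite /a; field; rewrite subr_eq0 gt_eqF.
have -> : pot p (fun n => if n == m then p else Y n)
    = shadow_pot (m - 1) p (Y (m - 1)) + shadow_pot (m + 1) p (Y (m + 1)).
  by rewrite /pot -/m eqxx shadow_pot_xx addr0 !ifN //; apply/eqP; lia.
have := ge0 x p; have : 0 <= a * d x p by rewrite mulr_ge0 ?ge0 ?ltW.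
have := pot_request_le (Y m) (Y (m - 1)) (Y (m + 1)) ps.
have [-> | xs] := pselect (x = s); first by rewrite pot_src; lra.
have [|[|[|far]]] : ring_index x = m \/ ring_index x = m - 1 \/ ring_index x = m + 1
    \/ ring_index x + 2 <= m \/ m + 2 <= ring_index x by lia.
- by move/(pot_step_same Y xs ps)/(_ erefl); lra.
- by move/(pot_step_succ Y xs ps)/(_ erefl); lra.
- by move/(pot_step_pred Y xs ps)/(_ erefl); lra.
- by have := dist_src_le_far xs ps far; have := pot_ge0 x Y; lra.
Qed.

End Potential.

Lemma sumr_seq_update (V : nmodType) (I : eqType) (L : seq I) (m : I) (F G : I -> V) :
  uniq L -> m \in L -> (forall n, n != m -> G n = F n) ->
  \sum_(n <- L) G n + F m = \sum_(n <- L) F n + G m.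
Proof.
move=> L_uniq mL GF; rewrite !(bigD1_seq m mL L_uniq) /=.
by rewrite (eq_bigr _ (fun n => GF n)) addrAC [RHS]addrAC [G m + _]addrC.
Qed.

Section RingDecomposition.
Variables (R : realType) (T : Type) (d : T -> T -> R) (s : T) (r : R).
Hypotheses (d_metric : is_metric d) (r_gt1 : 1 < r).
Local Notation ring_of := (ring_index d s r).
Local Notation MS n := (Msub d s r n).
Local Notation Md n := (Msub_dist d s r n).
Local Notation Ms n := (Msub_src d s r n).

Definition to_ring n (x : T) : option (MS n) :=
  match pselect (x <> s /\ ring_pt d s r n x) with
  | left h => Some (exist _ x (proj2 h))
  | right _ => None
  end.

Definition ring_requests n (t : seq T) : seq (MS n) := pmap (to_ring n) t.

Lemma ring_requests_rcons n t x : ring_requests n (rcons t x) =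
  if to_ring n x is Some y then rcons (ring_requests n t) y else ring_requests n t.
Proof.
by rewrite /ring_requests -cats1 pmap_cat /=; case: to_ring => [y|] /=; rewrite ?cats1 ?cats0.
Qed.

Lemma to_ringP n x y : to_ring n x = Some y -> [/\ sval y = x, x <> s & ring_of x = n].
Proof.
rewrite /to_ring; case: pselect => // -[xs [//|[lo hi]]] [<-]; split=> //.
by apply: ring_index_eq => //; rewrite lo hi.
Qed.

Lemma to_ring_index x : x <> s -> exists y, to_ring (ring_of x) x = Some y.
Proof.
move=> xs; rewrite /to_ring; case: pselect => [h|[]]; first by eexists.
by split=> //; right; apply/andP/ring_index_bounds.
Qed.

Lemma to_ring_other n x : n <> ring_of x -> to_ring n x = None.
Proof. by case E: to_ring => [y|] // nx; case: nx; case/to_ringP: E. Qed.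

Lemma to_ring_src n : to_ring n s = None.
Proof. by case E: to_ring => [y|] //; case/to_ringP: E. Qed.

Lemma ring_requests_rcons_nil n t x :
  ring_requests n (rcons t x) = [::] -> ring_requests n t = [::].
Proof.
by rewrite ring_requests_rcons; case: to_ring => // y /(congr1 size); rewrite size_rcons.
Qed.

Lemma ring_requests_eq_nil n t : n \notin [seq ring_of x | x <- t] -> ring_requests n t = [::].
Proof.
elim: t => [|x t IH] //=; rewrite in_cons negb_or => /andP[/eqP nx /IH].
by rewrite /ring_requests /= to_ring_other.
Qed.

Definition ring_server (n : int) (j : nat) : nat := pickle (inl (n, j) : int * nat + nat).

Definition spare_server (k : nat) : nat := pickle (inr k : int * nat + nat).

Variable algs : forall n, online_alg (MS n).

(* Requests at [s] cost nothing: they are given to a server that has never moved. *)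
Definition ring_alg : online_alg T := fun h =>
  let x := last s h in
  if to_ring (ring_of x) x is Some _
  then ring_server (ring_of x) (algs (ring_requests (ring_of x) h))
  else spare_server (size h).

Lemma ring_alg_rcons_src t : ring_alg (rcons t s) = spare_server (size t).+1.
Proof. by rewrite /ring_alg last_rcons to_ring_src size_rcons. Qed.

Lemma ring_alg_rcons t x y : to_ring (ring_of x) x = Some y ->
  ring_alg (rcons t x) = ring_server (ring_of x) (algs (rcons (ring_requests (ring_of x) t) y)).
Proof. by move=> ry; rewrite /ring_alg last_rcons ry ring_requests_rcons ry. Qed.

Lemma ring_alg_config t :
  (forall n j, alg_config s ring_alg t (ring_server n j)
               = sval (alg_config (Ms n) (@algs n) (ring_requests n t) j))
  /\ (forall k, (size t < k)%N -> alg_config s ring_alg t (spare_server k) = s).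
Proof.
elim/last_ind: t => [|t x [IHr IHs]]; first by split.
rewrite alg_config_rcons.
have [-> | xs] := pselect (x = s).
  rewrite ring_alg_rcons_src /move; split=> [n j | k].
    by rewrite (inj_eq (pcan_inj pickleK)) ring_requests_rcons to_ring_src IHr.
  rewrite size_rcons (inj_eq (pcan_inj pickleK)) => lt_k.
  by rewrite ifN ?IHs ?(ltnW lt_k) //; apply: contraTneq lt_k => -[->]; rewrite ltnn.
have [y ry] := to_ring_index xs; have [yx _ _] := to_ringP ry.
rewrite (ring_alg_rcons _ ry) /move.
split=> [n j | k]; rewrite (inj_eq (pcan_inj pickleK)); last first.
  by rewrite size_rcons => lt_k; apply: IHs; apply: ltnW.
rewrite ring_requests_rcons.
have [-> | nx] := eqVneq n (ring_of x); last first.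
  by rewrite to_ring_other ?ifN ?IHr //; [apply: contra nx => /eqP [->] | apply/eqP].
rewrite ry alg_config_rcons /move.
set jj := algs _.
have [-> | nj] := eqVneq j jj; first by rewrite !eqxx.
by rewrite !ifN ?IHr //; apply: contra nj => /eqP [->].
Qed.

Lemma ALG_cost_ring_alg L t : uniq L ->
  (forall n, n \notin L -> ring_requests n t = [::]) ->
  ALG_cost d s ring_alg t = \sum_(n <- L) ALG_cost (Md n) (Ms n) (@algs n) (ring_requests n t).
Proof.
move=> L_uniq; elim/last_ind: t => [|t x IH] L_covers; first by rewrite /ALG_cost big1.
rewrite ALG_cost_rcons IH => [|n /L_covers/ring_requests_rcons_nil //].
have [-> | xs] := pselect (x = s).
  rewrite ring_alg_rcons_src (proj2 (ring_alg_config t)) // metric_xx // addr0.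
  by apply: eq_bigr => n _; rewrite ring_requests_rcons to_ring_src.
have [y ry] := to_ring_index xs; have [yx _ _] := to_ringP ry.
have xL : ring_of x \in L.
  apply: contraT => /L_covers; rewrite ring_requests_rcons ry.
  by move/(congr1 size); rewrite size_rcons.
set F := fun n => ALG_cost (Md n) (Ms n) (@algs n) (ring_requests n t).
set G := fun n => ALG_cost (Md n) (Ms n) (@algs n) (ring_requests n (rcons t x)).
apply: (@addIr _ (F (ring_of x))); rewrite (sumr_seq_update (F := F) (G := G)) //; last first.
  by move=> n /eqP nx; rewrite /G ring_requests_rcons to_ring_other.
rewrite /G ring_requests_rcons ry ALG_cost_rcons (ring_alg_rcons _ ry).
by rewrite (proj1 (ring_alg_config t)) /Msub_dist yx addrAC addrA.
Qed.

End RingDecomposition.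

Section Shadows.
Variables (R : realType) (T : Type) (d : T -> T -> R) (s : T) (r : R).
Hypotheses (d_metric : is_metric d) (r_gt1 : 1 < r).
Local Notation ring_of := (ring_index d s r).
Local Notation MS n := (Msub d s r n).
Local Notation Md n := (Msub_dist d s r n).
Local Notation Ms n := (Msub_src d s r n).
Local Notation pot := (pot d s r).

(* The shadow of offline server [i] in ring [n] is server [pickle (i, ep n i)] of
   [cn n]; raising the epoch [ep n i] replaces it by a server still at the source. *)
Definition shadows (cn : forall n, config (MS n)) (ep : int -> nat -> nat) (i : nat) :
  int -> T := fun n => sval (cn n (pickle (i, ep n i))).

Variable L : seq int.
Hypothesis L_uniq : uniq L.

Let C := (4 * r - 1) / (r - 1).

Let C_gt0 : 0 < C.
Proof. by have r1 := r_gt1; apply: divr_gt0; lra. Qed.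

Section ShadowStep.
Variables (cn : forall n, config (MS n)) (Cn : int -> R) (ep : int -> nat -> nat).
Variables (x : T) (i0 : nat).
Let Y := shadows cn ep i0.

(* Offline server [i0] moves to [x]: its shadow in the ring of [x] follows it or,
   when that is cheaper, is replaced by a fresh server from [s]. *)
Definition shadow_epoch (n : int) (i : nat) : nat :=
  (ep n i + [&& i == i0, n == ring_of x & (d s x < d (Y n) x)%R])%N.

Definition shadow_move (n : int) : config (MS n) :=
  if to_ring d s r n x is Some y then move (cn n) (pickle (i0, shadow_epoch n i0)) y else cn n.

Definition shadow_cost (n : int) : R :=
  Cn n + if to_ring d s r n x is Some y then Md n (cn n (pickle (i0, shadow_epoch n i0))) y else 0.

Lemma shadows_move_other i : i != i0 -> shadows shadow_move shadow_epoch i = shadows cn ep i.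
Proof.
move=> ni; apply: funext => n; rewrite /shadows /shadow_move /shadow_epoch (negbTE ni) addn0.
case: to_ring => [y|] //; rewrite /move (inj_eq (pcan_inj pickleK)) ifN //.
by apply: contra ni => /eqP [->].
Qed.

Lemma shadows_move_self : x <> s ->
  shadows shadow_move shadow_epoch i0 = fun n => if n == ring_of x then x else Y n.
Proof.
move=> xs; apply: funext => n; rewrite /shadows /shadow_move /=.
have [-> | nx] := eqVneq n (ring_of x); last first.
  by rewrite to_ring_other /shadow_epoch ?(negbTE nx) ?andbF ?addn0 //; apply/eqP.
have [y ry] := to_ring_index d_metric r_gt1 xs.
by rewrite ry /move eqxx; case: (to_ringP d_metric r_gt1 ry).
Qed.

Hypothesis fresh : forall n i e, (ep n i < e)%N -> cn n (pickle (i, e)) = Ms n.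

Lemma shadow_move_fresh n i e :
  (shadow_epoch n i < e)%N -> shadow_move n (pickle (i, e)) = Ms n.
Proof.
move=> lt_e; have lt_e' : (ep n i < e)%N by apply: leq_ltn_trans lt_e; apply: leq_addr.
rewrite /shadow_move; case: to_ring => [y|]; last exact: fresh.
rewrite /move (inj_eq (pcan_inj pickleK)) ifN ?fresh //.
by apply: contraTneq lt_e => -[-> ->]; rewrite ltnn.
Qed.

Lemma reachable_shadow_move n t :
  reachable (Md n) (Ms n) (ring_requests d s r n t) (cn n) (Cn n) ->
  reachable (Md n) (Ms n) (ring_requests d s r n (rcons t x)) (shadow_move n) (shadow_cost n).
Proof.
rewrite ring_requests_rcons /shadow_move /shadow_cost.
by case: to_ring => [y|]; [apply: reachable_rcons | rewrite addr0].
Qed.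

Lemma shadow_cost_other n : n != ring_of x -> shadow_cost n = Cn n.
Proof. by move=> nx; rewrite /shadow_cost to_ring_other ?addr0 //; apply/eqP. Qed.

Lemma shadow_cost_index : x <> s ->
  shadow_cost (ring_of x) = Cn (ring_of x) + Num.min (d (Y (ring_of x)) x) (d s x).
Proof.
move=> xs; have [y ry] := to_ring_index d_metric r_gt1 xs.
have [yx _ _] := to_ringP d_metric r_gt1 ry.
rewrite /shadow_cost ry /Msub_dist yx /shadow_epoch !eqxx /=.
have [restart | stay] := ltrP (d s x) (d (Y (ring_of x)) x).
  by rewrite addn1 fresh ?ltnSn.
by rewrite addn0.
Qed.

End ShadowStep.

Section Invariant.
Variables (f : nat -> nat) (N : nat).
Local Notation served t := (served_config f (init_config s) t).

Definition shadow_inv (t : seq T) (cn : forall n, config (MS n)) (Cn : int -> R)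
    (ep : int -> nat -> nat) : Prop :=
  [/\ forall n, reachable (Md n) (Ms n) (ring_requests d s r n t) (cn n) (Cn n),
      forall n i e, (ep n i < e)%N -> cn n (pickle (i, e)) = Ms n &
      \sum_(n <- L) Cn n + \sum_(i <- iota 0 N) pot (served t i) (shadows cn ep i)
        <= C * serve d f (init_config s) t].

Lemma shadow_inv_nil :
  shadow_inv [::] (fun n => init_config (Ms n)) (fun=> 0) (fun _ _ => 0%N).
Proof.
split=> //; first by move=> n; apply: reachable_nil.
by rewrite big1 // big1 ?add0r ?mulr0 // => i _; apply: pot_src.
Qed.

Lemma shadow_inv_rcons_src t cn Cn ep :
  shadow_inv t cn Cn ep -> shadow_inv (rcons t s) cn Cn ep.
Proof.
case=> reach fresh bound; split=> //.
  by move=> n; rewrite ring_requests_rcons to_ring_src.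
have : \sum_(i <- iota 0 N) pot (served (rcons t s) i) (shadows cn ep i)
    <= \sum_(i <- iota 0 N) pot (served t i) (shadows cn ep i).
  apply: ler_sum => i _; rewrite served_config_rcons /move.
  by case: eqP => // _; rewrite pot_src ?pot_ge0.
have : 0 <= C * d (served t (f (size t))) s.
  by apply: mulr_ge0; [apply: ltW | apply: metric_ge0].
by rewrite serve_rcons mulrDr; lra.
Qed.

Lemma shadow_inv_rcons t x cn Cn ep (i0 := f (size t)) : x <> s -> (i0 < N)%N ->
  (forall n, n \notin L -> ring_requests d s r n (rcons t x) = [::]) ->
  shadow_inv t cn Cn ep ->
  shadow_inv (rcons t x) (shadow_move cn ep x i0) (shadow_cost cn Cn ep x i0)
    (shadow_epoch cn ep x i0).
Proof.
move=> xs i0N L_covers [reach fresh bound]; split.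
- by move=> n; apply: reachable_shadow_move.
- exact: shadow_move_fresh.
have xL : ring_of x \in L.
  have [y ry] := to_ring_index d_metric r_gt1 xs.
  apply: contraT => /L_covers; rewrite ring_requests_rcons ry.
  by move/(congr1 size); rewrite size_rcons.
have i0_iota : i0 \in iota 0 N by rewrite mem_iota.
have costs := sumr_seq_update L_uniq xL (@shadow_cost_other cn Cn ep x i0).
rewrite (@shadow_cost_index cn Cn ep x i0 fresh xs) in costs.
pose F i := pot (served t i) (shadows cn ep i).
pose G i := pot (served (rcons t x) i)
  (shadows (shadow_move cn ep x i0) (shadow_epoch cn ep x i0) i).
have GF i : i != i0 -> G i = F i.
  by move=> ni; rewrite /G /F served_config_rcons /move (negbTE ni) shadows_move_other.
have pots := sumr_seq_update (iota_uniq 0 N) i0_iota GF.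
have Gi0 : G i0 = pot x (fun n => if n == ring_of x then x else shadows cn ep i0 n).
  by rewrite /G served_config_rcons /move eqxx shadows_move_self.
rewrite Gi0 /G /F in pots.
have := pot_step d_metric r_gt1 (served t i0) (shadows cn ep i0) xs; rewrite -/C.
by rewrite serve_rcons mulrDr -/i0; lra.
Qed.

Lemma exists_shadow_inv t : {in gtn (size t), forall k, f k < N}%N ->
  (forall n, n \notin L -> ring_requests d s r n t = [::]) ->
  exists cn Cn ep, shadow_inv t cn Cn ep.
Proof.
elim/last_ind: t => [|t x IH] f_lt L_covers.
  by do 3 eexists; apply: shadow_inv_nil.
have f_lt' : {in gtn (size t), forall k, f k < N}%N.
  by move=> k lt_k; apply: f_lt; rewrite inE size_rcons ltnS ltnW.
have [cn [Cn [ep inv]]] := IH f_lt' (fun n nL => ring_requests_rcons_nil (L_covers n nL)).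
have [-> | xs] := pselect (x = s); first by exists cn, Cn, ep; apply: shadow_inv_rcons_src.
by do 3 eexists; apply: shadow_inv_rcons inv => //; apply: f_lt; rewrite inE size_rcons ltnS.
Qed.

End Invariant.

Lemma sum_OPT_cost_le t : (forall n, n \notin L -> ring_requests d s r n t = [::]) ->
  \sum_(n <- L) OPT_cost (Md n) (Ms n) (ring_requests d s r n t) <= C * OPT_cost d s t.
Proof.
move=> L_covers; rewrite -ler_pdivrMl //; apply: le_OPT_cost => f.
pose N := (\max_(k < size t) f k).+1.
have f_lt : {in gtn (size t), forall k, f k < N}%N.
  by move=> k lt_k; rewrite ltnS (@leq_bigmax _ (fun j : 'I_(size t) => f j) (Ordinal lt_k)).
have [cn [Cn [ep [reach _ bound]]]] := exists_shadow_inv f_lt L_covers.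
rewrite ler_pdivrMl //; apply: le_trans bound; rewrite -[X in X <= _]addr0 lerD //.
  apply: ler_sum => n _; apply: (OPT_cost_le _ (reach n)) => ? ?.
  exact: (metric_ge0 d_metric).
by apply: sumr_ge0 => i _; apply: pot_ge0.
Qed.

End Shadows.

Theorem theorem10 (R : realType) (T : Type) (d : T -> T -> R) (s : T) (r rho : R) :
  is_metric d -> 1 < r ->
  (forall n : int,
      admits_strictly_competitive (Msub_dist d s r n) (Msub_src d s r n) rho) ->
  admits_strictly_competitive d s ((4 * r - 1) / (r - 1) * rho).
Proof.
move=> d_metric r_gt1 comp.
have [algs algs_comp] : exists algs : forall n, online_alg (Msub d s r n),
    forall n, strictly_competitive (Msub_dist d s r n) (Msub_src d s r n) (algs n) rho.
  by exists (fun n => projT1 (cid (comp n))) => n; apply: (projT2 (cid (comp n))).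
exists (ring_alg algs) => sg.
set L := undup [seq ring_index d s r x | x <- sg].
have L_covers n : n \notin L -> ring_requests d s r n sg = [::].
  by rewrite mem_undup; apply: ring_requests_eq_nil.
have d_ge0 := metric_ge0 d_metric.
apply: (ALG_cost_le_scale d_ge0 _ _ _ (sum_OPT_cost_le d_metric r_gt1 (undup_uniq _) L_covers)).
- by apply: divr_ge0; lra.
- by apply: sumr_ge0 => n _; apply: OPT_cost_ge0 => ? ?; apply: d_ge0.
rewrite (ALG_cost_ring_alg d_metric r_gt1 algs (undup_uniq _) L_covers) mulr_sumr.
by apply: ler_sum => n _; apply: algs_comp.
Qed.
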